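(* Let $A$ be an affine Poisson $\Bbbk$-algebra and $\mathcal{U}(A)$ its Poisson enveloping algebra. (i) If $A$ is $\mathbb{Z}$-graded and $\{-,-\}$ is homogeneous of degree $d$ (i.e. $\{A(i),A(j)\}\subseteq A(i+j+d)$), then $\mathcal{U}(A)$ is $\mathbb{Z}$-graded with $\deg m_x=\deg x$ and $\deg h_x=\deg x+d$ for all homogeneous $x\in A$. (ii) If in (i) $A$ is connected $\mathbb{N}$-graded and $d\ge0$, then $\mathcal{U}(A)$ is connected $\mathbb{N}$-graded. (iii) If $A$ is a connected $\mathbb{N}$-graded algebra generated in degree $1$ and $\{-,-\}$ is homogeneous of degree $d\ge0$, then $\mathcal{U}(A)$ is a connected $\mathbb{N}$-graded algebra minimally generated by $m_{A(1)}$ and $h_{A(1)}$.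
   Context: A Poisson algebra is a commutative algebra with a Lie bracket satisfying $\{ab,c\}=a\{b,c\}+\{a,c\}b$. The Poisson enveloping algebra $\mathcal{U}(A)$ is the unital associative $\Bbbk$-algebra generated by two copies $m_A=\{m_a\}$, $h_A=\{h_a\}$ of $A$ (with $a\mapsto m_a$, $a\mapsto h_a$ linear) subject to $m_{xy}=m_xm_y$, $h_{\{x,y\}}=h_xh_y-h_yh_x$, $h_{xy}=m_yh_x+m_xh_y$, $m_{\{x,y\}}=h_xm_y-m_yh_x$, $m_1=1$. A graded algebra $B=\bigoplus_{i\ge0}B(i)$ is connected if $B(0)=\Bbbk$. ''Minimally generated'' means the images of these elements form a basis of $\mathfrak{m}/\mathfrak{m}^2$, $\mathfrak{m}$ the maximal graded ideal. *)

From HB Require Import structures.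
From mathcomp Require Import all_boot all_order all_algebra.
Set Implicit Arguments. Unset Strict Implicit. Unset Printing Implicit Defensive.
Import Order.TTheory GRing.Theory Num.Theory.
Local Open Scope ring_scope.

Section Defs.
Variable k : fieldType.

Definition is_Poisson_bracket (A : comAlgType k) (br : A -> A -> A) : Prop :=
  [/\ (forall (a : k) x y z, br (a *: x + y) z = a *: br x z + br y z),
      (forall (a : k) x y z, br z (a *: x + y) = a *: br z x + br z y),
      (forall x, br x x = 0),
      (forall x y z, br x (br y z) + br y (br z x) + br z (br x y) = 0) &
      (forall x y z, br (x * y) z = x * br y z + br x z * y)].

Definition is_subalgebra (A : comAlgType k) (Q : A -> Prop) : Prop :=
  [/\ Q 0, Q 1, (forall (a : k) x y, Q x -> Q y -> Q (a *: x + y)) &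
      (forall x y, Q x -> Q y -> Q (x * y))].

Definition in_gen_subalg (A : comAlgType k) (P : A -> Prop) (a : A) : Prop :=
  forall Q : A -> Prop, is_subalgebra Q -> (forall x, P x -> Q x) -> Q a.

Definition affine (A : comAlgType k) : Prop :=
  exists s : seq A, forall a, in_gen_subalg (fun x => x \in s) a.

Definition klinear (V W : lmodType k) (f : V -> W) : Prop :=
  forall (a : k) x y, f (a *: x + y) = a *: f x + f y.

Definition PEA_relations (A : comAlgType k) (br : A -> A -> A)
    (B : algType k) (m h : A -> B) : Prop :=
  [/\ klinear m, klinear h, (forall x y, m (x * y) = m x * m y) &
      (forall x y, h (br x y) = h x * h y - h y * h x)] /\
  [/\ (forall x y, h (x * y) = m y * h x + m x * h y),
      (forall x y, m (br x y) = h x * m y - m y * h x) &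
      m 1 = 1].

Definition alg_morph (B C : algType k) (phi : B -> C) : Prop :=
  [/\ klinear phi, (forall x y, phi (x * y) = phi x * phi y) & phi 1 = 1].

(* (U, m, h) is the Poisson enveloping algebra of (A, br): the unital
   associative k-algebra generated by m_A, h_A subject to the relations,
   i.e. the initial object among algebras with maps satisfying them. *)
Definition is_Poisson_enveloping (A : comAlgType k) (br : A -> A -> A)
    (U : algType k) (m h : A -> U) : Prop :=
  PEA_relations br m h /\
  forall (B : algType k) (m' h' : A -> B), PEA_relations br m' h' ->
    exists phi : U -> B,
      [/\ alg_morph phi, (forall x, phi (m x) = m' x),
          (forall x, phi (h x) = h' x) &
          (forall psi : U -> B, alg_morph psi -> (forall x, psi (m x) = m' x) ->
             (forall x, psi (h x) = h' x) -> forall u, psi u = phi u)].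

Definition is_subspace (V : lmodType k) (P : V -> Prop) : Prop :=
  P 0 /\ forall (a : k) x y, P x -> P y -> P (a *: x + y).

Definition Zgraded (B : algType k) (G : int -> B -> Prop) : Prop :=
  [/\ (forall i, is_subspace (G i)),
      (forall u, exists (s : seq int) (f : int -> B),
          (forall i, G i (f i)) /\ u = \sum_(i <- s) f i),
      (forall (s : seq int) (f : int -> B), uniq s -> (forall i, G i (f i)) ->
          \sum_(i <- s) f i = 0 -> forall i, i \in s -> f i = 0),
      (forall i j x y, G i x -> G j y -> G (i + j) (x * y)) &
      G 0 1].

Definition connected_Ngraded (B : algType k) (G : int -> B -> Prop) : Prop :=
  [/\ Zgraded G,
      (forall i x, i < 0 -> G i x -> x = 0) &
      (forall x, G 0 x <-> exists c : k, x = c *: 1)].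

Definition bracket_homog (A : comAlgType k) (br : A -> A -> A)
    (G : int -> A -> Prop) (d : int) : Prop :=
  forall i j x y, G i x -> G j y -> G (i + j + d) (br x y).

Definition PEA_degrees (A : comAlgType k) (U : algType k) (m h : A -> U)
    (GA : int -> A -> Prop) (GU : int -> U -> Prop) (d : int) : Prop :=
  forall i x, GA i x -> GU i (m x) /\ GU (i + d) (h x).

Definition in_max_ideal (B : algType k) (G : int -> B -> Prop) (u : B) : Prop :=
  exists (s : seq int) (f : int -> B),
    [/\ (forall i, i \in s -> 0 < i), (forall i, G i (f i)) & u = \sum_(i <- s) f i].

Definition in_max_ideal_sq (B : algType k) (G : int -> B -> Prop) (u : B) : Prop :=
  exists s : seq (B * B),
    (forall p, p \in s -> in_max_ideal G p.1 /\ in_max_ideal G p.2) /\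
    u = \sum_(p <- s) p.1 * p.2.

(* the images of m_{A(1)} and h_{A(1)} form a basis of m/m^2, i.e. the
   map A(1) (+) A(1) -> m/m^2, (x,y) |-> [m_x + h_y] is a linear bijection *)
Definition minimally_generated_by_m1_h1 (A : comAlgType k) (U : algType k)
    (m h : A -> U) (GA : int -> A -> Prop) (GU : int -> U -> Prop) : Prop :=
  (forall x, GA 1 x -> in_max_ideal GU (m x) /\ in_max_ideal GU (h x)) /\
  (forall u, in_max_ideal GU u ->
     exists x y, [/\ GA 1 x, GA 1 y & in_max_ideal_sq GU (u - (m x + h y))]) /\
  (forall x y, GA 1 x -> GA 1 y -> in_max_ideal_sq GU (m x + h y) ->
     x = 0 /\ y = 0).

End Defs.

From HB Require Import structures.
From mathcomp Require Import all_boot all_order all_algebra.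
From mathcomp Require Import ring zify boolp.
Import Order.TTheory GRing.Theory Num.Theory.
Set Implicit Arguments. Unset Strict Implicit. Unset Printing Implicit Defensive.
Local Open Scope ring_scope.

(* The grading of U(A) comes from an algebra map U(A) -> U(A)[t, t^-1],
   u |-> \sum_i u_i t^i, given by the universal property on
   m_x |-> \sum_i m_{x_i} t^i and h_x |-> \sum_i h_{x_i} t^(i + d); the Laurent
   ring is realised inside the linear endomorphisms of U(A)^Z.  U(i) is the set
   of u with image u t^i.  These subspaces are independent (evaluate on a delta
   sequence), and they span U(A) because the sums of homogeneous elements form a
   subalgebra containing m_A and h_A.  Connectedness holds because generators of
   degree <= 0 are scalars.
   For (iii), m_{A(1)} and h_{A(1)} span m/m^2 because A_+ = A(1) + A_+^2.  They
   are independent modulo m^2 because m_x |-> x_0 + x_1 t^2, h_x |-> x_1 t^3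
   defines an algebra map U(A) -> A[t]/(t^4) sending m into t^2 A[t]/(t^4),
   an ideal of square zero. *)

Section EnvelopingInduction.
Variables (k : fieldType) (A : comAlgType k) (br : A -> A -> A) (U : algType k)
  (m h : A -> U).
Hypothesis envU : is_Poisson_enveloping br m h.
Variable S : U -> Prop.
Hypotheses (S1 : S 1) (SD : forall u v, S u -> S v -> S (u + v))
  (SZ : forall (a : k) u, S u -> S (a *: u)) (SM : forall u v, S u -> S v -> S (u * v))
  (Sm : forall x, S (m x)) (Sh : forall x, S (h x)).

Let Sb : pred U := fun u => `[< S u >].

Let Sb_closed : GRing.subsemialg_closed Sb.
Proof.
have S0 : S 0 by rewrite -(scale0r 1); apply: SZ.
split; [exact/asboolP | split; [exact/asboolP|] | |].
- by move=> u v /asboolP Su /asboolP Sv; apply/asboolP; apply: SD.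
- by move=> a u /asboolP Su; apply/asboolP; apply: SZ.
- by move=> u v /asboolP Su /asboolP Sv; apply/asboolP; apply: SM.
Qed.

HB.instance Definition _ := GRing.isSubalgClosed.Build k U Sb Sb_closed.
Record subalg := Subalg { subalg_val : U; subalg_mem : Sb subalg_val }.
HB.instance Definition _ := [isSub for subalg_val].
HB.instance Definition _ := [Choice of subalg by <:].
HB.instance Definition _ := [SubChoice_isSubAlgebra of subalg by <:].

(* The universal map into [subalg] composed with [val] must be the identity. *)
Lemma enveloping_ind u : S u.
Proof.
have [relU univU] := envU.
have [[mL hL mM hB] [hM mB m1]] := relU.
pose m_sub x := Subalg (introT (asboolP _) (Sm x)).
pose h_sub x := Subalg (introT (asboolP _) (Sh x)).
have rel_sub : PEA_relations br m_sub h_sub.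
  split; split; rewrite ?/klinear => *; apply: val_inj;
    by rewrite /= ?mL ?hL ?mM ?hB ?hM ?mB ?m1.
have [phi [[phiL phiM phi1] phim phih _]] := univU _ _ _ rel_sub.
have [idU [_ _ _ uniq_id]] := univU _ _ _ relU.
have val_phi v : val (phi v) = v.
  transitivity (idU v); last by symmetry; apply: (uniq_id id); first split.
  apply: (uniq_id (val \o phi)).
  - by split=> [a x y|x y|]; rewrite /= ?phiL ?phiM ?phi1.
  - by move=> x; rewrite /= phim.
  - by move=> x; rewrite /= phih.
by rewrite -(val_phi u); apply/asboolP; exact: subalg_mem.
Qed.

End EnvelopingInduction.

Section KLinear.
Variables (k : fieldType) (V W : lmodType k) (f : V -> W).
Hypothesis f_lin : klinear f.

Let fL : {linear V -> W} := HB.pack f (GRing.isLinear.Build k V W *:%R f f_lin).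

Lemma klinear0 : f 0 = 0. Proof. exact: (linear0 fL). Qed.
Lemma klinearD x y : f (x + y) = f x + f y. Proof. exact: (linearD fL). Qed.
Lemma klinearB x y : f (x - y) = f x - f y. Proof. exact: (linearB fL). Qed.
Lemma klinearZ (a : k) x : f (a *: x) = a *: f x. Proof. exact: (linearZ_LR fL). Qed.
Lemma klinear_sum (I : Type) (s : seq I) (F : I -> V) :
  f (\sum_(i <- s) F i) = \sum_(i <- s) f (F i).
Proof. exact: (linear_sum fL). Qed.

End KLinear.

Section KLinearClosure.
Variables (k : fieldType) (V W X : lmodType k).

Lemma klinear_comp (g : W -> X) (f : V -> W) :
  klinear g -> klinear f -> klinear (fun x => g (f x)).
Proof. by move=> gL fL a x y; rewrite fL gL. Qed.

Lemma klinear_add (f g : V -> W) :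
  klinear f -> klinear g -> klinear (fun x => f x + g x).
Proof. by move=> fL gL a x y; rewrite fL gL scalerDr addrACA. Qed.

Lemma klinear_sub (f g : V -> W) :
  klinear f -> klinear g -> klinear (fun x => f x - g x).
Proof. by move=> fL gL a x y; rewrite fL gL scalerBr opprD addrACA. Qed.

End KLinearClosure.

Lemma klinear_mull (k : fieldType) (R : algType k) (c : R) : klinear (fun x : R => c * x).
Proof. by move=> a x y; rewrite mulrDr scalerAr. Qed.

Lemma klinear_mulr (k : fieldType) (R : algType k) (c : R) : klinear (fun x : R => x * c).
Proof. by move=> a x y; rewrite mulrDl scalerAl. Qed.

Lemma klinear_mull_comp (k : fieldType) (V : lmodType k) (R : algType k) (f : V -> R) c :
  klinear f -> klinear (fun x => c * f x).
Proof. exact: klinear_comp (klinear_mull c). Qed.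

Lemma klinear_mulr_comp (k : fieldType) (V : lmodType k) (R : algType k) (f : V -> R) c :
  klinear f -> klinear (fun x => f x * c).
Proof. exact: klinear_comp (klinear_mulr c). Qed.

(** * Endomorphisms of V^Z and Laurent monomials *)

Section Endomorphisms.
Variables (k : fieldType) (V : algType k).

Definition seq_linear (f : (int -> V) -> int -> V) :=
  forall a phi psi, f (fun n => a *: phi n + psi n) = (fun n => a *: f phi n + f psi n).

Record endo := Endo { endo_fun :> (int -> V) -> int -> V; endo_linear : seq_linear endo_fun }.

Lemma endoP (X Y : endo) : (forall phi n, X phi n = Y phi n) -> X = Y.
Proof.
case: X Y => f fL [g gL] /= eq_fg.
have {eq_fg} E : f = g by apply/funext => phi; apply/funext; apply: eq_fg.
by subst g; congr Endo; apply: Prop_irrelevance.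
Qed.

HB.instance Definition _ := gen_eqMixin endo.
HB.instance Definition _ := gen_choiceMixin endo.

Lemma endoL (X : endo) a phi psi n :
  X (fun j => a *: phi j + psi j) n = a *: X phi n + X psi n.
Proof. by rewrite (endo_linear X). Qed.

Lemma endo0 (X : endo) n : X (fun=> 0) n = 0.
Proof.
have := endoL X 1 (fun=> 0) (fun=> 0) n; under [in X _ n]eq_fun do rewrite scaler0 addr0.
by rewrite scale1r => /(canLR (addrK _)); rewrite subrr.
Qed.

Lemma endoD (X : endo) phi psi n : X (fun j => phi j + psi j) n = X phi n + X psi n.
Proof. by rewrite -[X phi n]scale1r -endoL; congr (X _ n); apply/funext => j; rewrite scale1r. Qed.

Lemma endoZ (X : endo) a phi n : X (fun j => a *: phi j) n = a *: X phi n.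
Proof.
by rewrite -[RHS]addr0 -(endo0 X n) -endoL; congr (X _ n); apply/funext => j; rewrite addr0.
Qed.

Let add_linear (X Y : endo) : seq_linear (fun phi n => X phi n + Y phi n).
Proof. by move=> a phi psi; apply/funext => n; rewrite !endoL scalerDr addrACA. Qed.
Let opp_linear (X : endo) : seq_linear (fun phi n => - X phi n).
Proof. by move=> a phi psi; apply/funext => n; rewrite endoL opprD scalerN. Qed.
Let zero_linear : seq_linear (fun _ _ => 0).
Proof. by move=> a phi psi; apply/funext => n; rewrite scaler0 addr0. Qed.

Let endo_add X Y := Endo (add_linear X Y).
Let endo_opp X := Endo (opp_linear X).
Let endo_zero := Endo zero_linear.

Let endo_addA : associative endo_add.
Proof. by move=> X Y Z; apply: endoP => phi n /=; rewrite addrA. Qed.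
Let endo_addC : commutative endo_add.
Proof. by move=> X Y; apply: endoP => phi n /=; rewrite addrC. Qed.
Let endo_add0 : left_id endo_zero endo_add.
Proof. by move=> X; apply: endoP => phi n /=; rewrite add0r. Qed.
Let endo_addN : left_inverse endo_zero endo_opp endo_add.
Proof. by move=> X; apply: endoP => phi n /=; rewrite addNr. Qed.

HB.instance Definition _ := GRing.isZmodule.Build endo endo_addA endo_addC endo_add0 endo_addN.

Let one_linear : seq_linear id. Proof. by []. Qed.
Let mul_linear (X Y : endo) : seq_linear (fun phi => X (Y phi)).
Proof. by move=> a phi psi; rewrite !endo_linear. Qed.

Let endo_one := Endo one_linear.
Let endo_mul X Y := Endo (mul_linear X Y).

Let endo_mulA : associative endo_mul. Proof. by move=> X Y Z; apply: endoP. Qed.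
Let endo_mul1 : left_id endo_one endo_mul. Proof. by move=> X; apply: endoP. Qed.
Let endo_mulr1 : right_id endo_one endo_mul. Proof. by move=> X; apply: endoP. Qed.
Let endo_mulDl : left_distributive endo_mul +%R. Proof. by move=> X Y Z; apply: endoP. Qed.
Let endo_mulDr : right_distributive endo_mul +%R.
Proof. by move=> X Y Z; apply: endoP => phi n /=; rewrite endoD. Qed.
Let endo_one_neq0 : endo_one != 0.
Proof.
by apply/eqP => /(congr1 (fun X : endo => X (fun=> 1) 0)) /=; apply/eqP; exact: oner_neq0.
Qed.

HB.instance Definition _ := GRing.Zmodule_isNzRing.Build endo
  endo_mulA endo_mul1 endo_mulr1 endo_mulDl endo_mulDr endo_one_neq0.

Let scale_linear a (X : endo) : seq_linear (fun phi n => a *: X phi n).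
Proof. by move=> b phi psi; apply/funext => n; rewrite endoL scalerDr !scalerA mulrC. Qed.

Let endo_scale a X := Endo (scale_linear a X).

Let endo_scaleA a b X : endo_scale a (endo_scale b X) = endo_scale (a * b) X.
Proof. by apply: endoP => phi n /=; rewrite scalerA. Qed.
Let endo_scale1 : left_id 1 endo_scale.
Proof. by move=> X; apply: endoP => phi n /=; rewrite scale1r. Qed.
Let endo_scaleDr : right_distributive endo_scale +%R.
Proof. by move=> a X Y; apply: endoP => phi n /=; rewrite scalerDr. Qed.
Let endo_scaleDl X : {morph endo_scale^~ X : a b / a + b}.
Proof. by move=> a b; apply: endoP => phi n /=; rewrite scalerDl. Qed.

HB.instance Definition _ := GRing.Zmodule_isLmodule.Build k endo
  endo_scaleA endo_scale1 endo_scaleDr endo_scaleDl.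

Let endo_scaleAl (a : k) (X Y : endo) : a *: (X * Y) = (a *: X) * Y.
Proof. by apply: endoP. Qed.
HB.instance Definition _ := GRing.Lmodule_isLalgebra.Build k endo endo_scaleAl.

Let endo_scaleAr (a : k) (X Y : endo) : a *: (X * Y) = X * (a *: Y).
Proof. by apply: endoP => phi n /=; rewrite endoZ. Qed.
HB.instance Definition _ := GRing.Lalgebra_isAlgebra.Build k endo endo_scaleAr.

Lemma endo_addE (X Y : endo) phi n : (X + Y) phi n = X phi n + Y phi n. Proof. by []. Qed.
Lemma endo_zeroE phi n : (0 : endo) phi n = 0. Proof. by []. Qed.

Lemma endo_sumE (I : Type) (s : seq I) (F : I -> endo) phi n :
  (\sum_(i <- s) F i) phi n = \sum_(i <- s) F i phi n.
Proof. by elim: s => [|i s IHs]; rewrite ?big_nil ?big_cons // endo_addE IHs. Qed.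

End Endomorphisms.

Section Monomials.
Variables (k : fieldType) (V : algType k).

Definition delta : int -> V := fun n => (n == 0)%:R.

Let monomial_linear i (u : V) : seq_linear (fun phi n => u * phi (n - i)).
Proof. by move=> a phi psi; apply/funext => n; rewrite mulrDr scalerAr. Qed.

(* [monomial i u] is multiplication by [u t^i], so [endo V] contains [V[t, t^-1]]. *)
Definition monomial i u : endo V := Endo (monomial_linear i u).

Lemma monomial_klinear i : klinear (monomial i).
Proof. by move=> a u v; apply: endoP => phi n /=; rewrite mulrDl scalerAl. Qed.

Lemma monomialM i j u v : monomial i u * monomial j v = monomial (i + j) (u * v).
Proof. by apply: endoP => phi n /=; rewrite mulrA opprD addrA. Qed.

Lemma monomial01 : monomial 0 1 = 1.
Proof. by apply: endoP => phi n /=; rewrite mul1r subr0. Qed.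

Lemma monomial_delta i u n : monomial i u delta n = if n == i then u else 0.
Proof. by rewrite /= /delta subr_eq0; case: eqP; rewrite ?mulr1 ?mulr0. Qed.

(* [tmonomial i u] is multiplication by [u t^i] on [V[t]/(t^4)], sitting in
   positions [0..3] of [V^Z]; for [i = 0] it acts on all positions, so that
   [tmonomial 0 1 = 1]. *)
Definition tmonomial_acts (i n : int) : bool := (i == 0) || (i <= n <= 3).

Let tmonomial_linear i (u : V) :
  seq_linear (fun phi n => if tmonomial_acts i n then u * phi (n - i) else 0).
Proof.
move=> a phi psi; apply/funext => n.
by case: ifP; rewrite ?scaler0 ?addr0 // mulrDr scalerAr.
Qed.

Definition tmonomial i u : endo V := Endo (tmonomial_linear i u).

Lemma tmonomial_klinear i : klinear (tmonomial i).
Proof.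
move=> a u v; apply: endoP => phi n /=.
by case: ifP; rewrite ?scaler0 ?addr0 // mulrDl scalerAl.
Qed.

Lemma tmonomialM i j u v : 0 <= i -> 0 <= j ->
  tmonomial i u * tmonomial j v = tmonomial (i + j) (u * v).
Proof.
move=> i_ge0 j_ge0; apply: endoP => phi n /=; rewrite /tmonomial_acts opprD addrA.
case: (eqVneq i 0) => [->|/negPf i_neq0]; case: (eqVneq j 0) => [->|/negPf j_neq0].
- by rewrite !add0r !subr0 /= mulrA.
- by rewrite !add0r !subr0 /= j_neq0; case: ifP; rewrite ?mulr0 ?mulrA.
- by rewrite !addr0 /= i_neq0; case: ifP; rewrite ?mulr0 ?mulrA ?subr0.
have -> /= : (i + j == 0) = false by apply/eqP; move: i_neq0 j_neq0; lia.
case: (boolP (i <= n <= 3)) => H1; case: (boolP (j <= n - i <= 3)) => H2;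
  case: (boolP (i + j <= n <= 3)) => H3; rewrite ?mulr0 ?mulrA //; exfalso;
  move: H1 H2 H3; lia.
Qed.

Lemma tmonomial_eq0 i u : 4 <= i -> tmonomial i u = 0.
Proof.
move=> i_ge4; apply: endoP => phi n /=; rewrite /tmonomial_acts.
by have -> : (i == 0) || (i <= n <= 3) = false by apply/negbTE; apply/negP; lia.
Qed.

Lemma tmonomial01 : tmonomial 0 1 = 1.
Proof. by apply: endoP => phi n /=; rewrite mul1r subr0. Qed.

Lemma tmonomial_delta i u n : 0 <= i <= 3 ->
  tmonomial i u delta n = if n == i then u else 0.
Proof.
move=> i_range; rewrite /= /tmonomial_acts /delta subr_eq0.
case: (n =P i) => [->|_]; last by case: ifP; rewrite ?mulr0.
by case/andP: i_range => _ ->; rewrite lexx orbT mulr1.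
Qed.

End Monomials.

Arguments delta {k V}.

(** * Graded algebras *)

Section Subspace.
Variables (k : fieldType) (V : lmodType k) (P : V -> Prop).
Hypothesis P_subspace : is_subspace P.

Lemma subspace0 : P 0. Proof. by case: P_subspace. Qed.

Lemma subspaceD x y : P x -> P y -> P (x + y).
Proof. by case: P_subspace => _ PZD Px Py; rewrite -[x]scale1r; apply: PZD. Qed.

Lemma subspaceZ (a : k) x : P x -> P (a *: x).
Proof. by case: P_subspace => P0 PZD Px; rewrite -[_ *: x]addr0; apply: PZD. Qed.

Lemma subspace_sum (I : eqType) (s : seq I) (F : I -> V) :
  (forall i, i \in s -> P (F i)) -> P (\sum_(i <- s) F i).
Proof.
elim: s => [|i s IHs] PF; first by rewrite big_nil; apply: subspace0.
rewrite big_cons; apply: subspaceD; first by apply: PF; rewrite mem_head.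
by apply: IHs => j js; apply: PF; rewrite in_cons js orbT.
Qed.

End Subspace.

Section Decompositions.
Variables (k : fieldType) (B : algType k) (G : int -> B -> Prop).
Hypotheses (G_subspace : forall i, is_subspace (G i))
  (G_mul : forall i j x y, G i x -> G j y -> G (i + j) (x * y)).

Definition graded_dec (l : seq (int * B)) (u : B) : Prop :=
  (forall p, p \in l -> G p.1 p.2) /\ u = \sum_(p <- l) p.2.

Definition has_dec (P : int -> B -> Prop) (u : B) : Prop :=
  exists2 l, graded_dec l u & forall p, p \in l -> P p.1 p.2.

Definition component (l : seq (int * B)) (n : int) : B := \sum_(p <- l | p.1 == n) p.2.

Lemma graded_component (l : seq (int * B)) n :
  (forall p, p \in l -> G p.1 p.2) -> G n (component l n).
Proof.
move=> Gl; rewrite /component -big_filter; apply: (subspace_sum (G_subspace n)) => p.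
by rewrite mem_filter => /andP [/eqP <-]; apply: Gl.
Qed.

Lemma sum_by_degree (C : zmodType) (F : int * B -> C) l (s : seq int) :
  uniq s -> (forall p, p \in l -> p.1 \in s) ->
  \sum_(p <- l) F p = \sum_(n <- s) \sum_(p <- l | p.1 == n) F p.
Proof.
move=> s_uniq ls; rewrite (exchange_big_dep xpredT) //= big_seq [RHS]big_seq.
apply: eq_bigr => p pl; rewrite big_mkcond (bigD1_seq p.1) ?ls //= eqxx big1 ?addr0 //.
by move=> n /negPf; rewrite eq_sym => ->.
Qed.

Variable P : int -> B -> Prop.

Lemma has_dec_homog i u : G i u -> P i u -> has_dec P u.
Proof.
move=> Gu Pu; exists [:: (i, u)]; last by move=> p /[!inE] /eqP ->.
by split; [move=> p /[!inE] /eqP -> | rewrite big_seq1].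
Qed.

Lemma has_dec0 : has_dec P 0.
Proof. by exists [::] => //; split => //; rewrite big_nil. Qed.

Lemma has_decD u v : has_dec P u -> has_dec P v -> has_dec P (u + v).
Proof.
move=> [l [Gl ->] Pl] [l' [Gl' ->] Pl']; exists (l ++ l').
  by split; [move=> p /[!mem_cat] /orP[/Gl|/Gl'] | rewrite big_cat].
by move=> p /[!mem_cat] /orP[/Pl|/Pl'].
Qed.

Lemma has_dec_sum (I : eqType) (s : seq I) (F : I -> B) :
  (forall i, i \in s -> has_dec P (F i)) -> has_dec P (\sum_(i <- s) F i).
Proof.
elim: s => [|i s IHs] PF; first by rewrite big_nil; apply: has_dec0.
rewrite big_cons; apply: has_decD; first by apply: PF; rewrite mem_head.
by apply: IHs => j js; apply: PF; rewrite in_cons js orbT.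
Qed.

Lemma has_decZ (a : k) u : (forall i v, P i v -> P i (a *: v)) ->
  has_dec P u -> has_dec P (a *: u).
Proof.
move=> PZ [l [Gl ->] Pl]; rewrite scaler_sumr.
apply: has_dec_sum => p /[dup] /Gl Gp /Pl Pp.
exact: has_dec_homog (subspaceZ (G_subspace _) _ Gp) (PZ _ _ Pp).
Qed.

Lemma has_decM u v :
  (forall i j x y, G i x -> G j y -> P i x -> P j y -> P (i + j) (x * y)) ->
  has_dec P u -> has_dec P v -> has_dec P (u * v).
Proof.
move=> PM [l [Gl ->] Pl] [l' [Gl' ->] Pl']; rewrite mulr_suml.
apply: has_dec_sum => p pl; rewrite mulr_sumr; apply: has_dec_sum => q ql.
have [Gp Gq] := (Gl p pl, Gl' q ql).
exact: has_dec_homog (G_mul Gp Gq) (PM _ _ _ _ Gp Gq (Pl p pl) (Pl' q ql)).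
Qed.

End Decompositions.

Section GradedAlgebra.
Variables (k : fieldType) (B : algType k) (G : int -> B -> Prop).
Hypothesis G_graded : Zgraded G.

Lemma graded_subspace i : is_subspace (G i). Proof. by case: G_graded. Qed.

Lemma graded_mul i j x y : G i x -> G j y -> G (i + j) (x * y).
Proof. by case: G_graded => _ _ _ + _; apply. Qed.

Lemma graded_one : G 0 1. Proof. by case: G_graded. Qed.

Local Notation graded_dec := (graded_dec G).

Lemma graded_dec_exists u : exists l, graded_dec l u.
Proof.
case: G_graded => _ /(_ u) [s [f [Gf ->]]] _ _ _.
by exists [seq (i, f i) | i <- s]; split; [move=> p /mapP [i _ ->] | rewrite big_map].
Qed.

Lemma component_dec0 l n : graded_dec l 0 -> component l n = 0.
Proof.
move=> [Gl l0]; set s := undup [seq p.1 | p <- l].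
have ls p : p \in l -> p.1 \in s by move=> pl; rewrite mem_undup map_f.
case: G_graded => _ _ /(_ s (component l)) direct _ _.
have := direct (undup_uniq _) (fun n => graded_component graded_subspace n Gl).
rewrite -sum_by_degree ?undup_uniq // -l0 => /(_ erefl n) comp0.
case sn: (n \in s); first exact: comp0.
rewrite /component big_seq_cond big1 // => p /andP [/ls pl /eqP pn].
by rewrite -pn pl in sn.
Qed.

Lemma graded_decZD (a : k) l l' x y : graded_dec l x -> graded_dec l' y ->
  graded_dec ([seq (p.1, a *: p.2) | p <- l] ++ l') (a *: x + y).
Proof.
move=> [Gl ->] [Gl' ->]; split; last by rewrite big_cat big_map scaler_sumr.
move=> p /[!mem_cat] /orP [/mapP [q ql ->] /= | /Gl' //].
exact: (subspaceZ (graded_subspace _) _ (Gl q ql)).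
Qed.

Lemma component_eq l l' u n :
  graded_dec l u -> graded_dec l' u -> component l n = component l' n.
Proof.
move=> Dl Dl'; have := graded_decZD (-1) Dl Dl'; rewrite scaleN1r addNr.
move=> /(component_dec0 n).
rewrite /component big_cat big_map /= -scaler_sumr scaleN1r addrC => /eqP.
by rewrite subr_eq0 => /eqP.
Qed.

Lemma component_homog l u i : graded_dec l u -> G i u -> component l i = u.
Proof.
move=> Dl Gu; have Du : graded_dec [:: (i, u)] u.
  by split; [move=> p /[!inE] /eqP -> | rewrite big_seq1].
by rewrite (component_eq i Dl Du) /component big_cons big_nil eqxx addr0.
Qed.

Lemma has_dec_homog_ind (P : int -> B -> Prop) (Q : B -> Prop) i u :
  Q 0 -> (forall x y, Q x -> Q y -> Q (x + y)) -> (forall v, P i v -> Q v) ->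
  has_dec G P u -> G i u -> Q u.
Proof.
move=> Q0 QD QP [l Dl Pl] Gu; rewrite -(component_homog Dl Gu) /component big_seq_cond.
by apply: big_ind => // p /andP [/Pl Pp /eqP pi]; apply: QP; rewrite -pi.
Qed.

Section Lift.
Variables (C : lmodType k) (Psi : int -> B -> C).
Hypothesis Psi_linear : forall i, klinear (Psi i).

Lemma sum_dec_eq l l' u : graded_dec l u -> graded_dec l' u ->
  \sum_(p <- l) Psi p.1 p.2 = \sum_(p <- l') Psi p.1 p.2.
Proof.
move=> Dl Dl'; set s := undup [seq p.1 | p <- l ++ l'].
have sum_comp l'' : {subset l'' <= l ++ l'} ->
    \sum_(p <- l'') Psi p.1 p.2 = \sum_(n <- s) Psi n (component l'' n).
  move=> sub; rewrite (sum_by_degree (s := s) _ (undup_uniq _)); last first.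
    by move=> p /sub pl; rewrite mem_undup map_f.
  apply: eq_bigr => n _; rewrite (eq_bigr (fun p => Psi n p.2)) => [|p /eqP -> //].
  by rewrite -big_filter -(klinear_sum (Psi_linear n)) big_filter.
rewrite (sum_comp l) => [|p pl]; last by rewrite mem_cat pl.
rewrite (sum_comp l') => [|p pl]; last by rewrite mem_cat pl orbT.
by apply: eq_bigr => n _; rewrite (component_eq n Dl Dl').
Qed.

Let dec_of u := proj1_sig (cid (graded_dec_exists u)).
Let dec_ofP u : graded_dec (dec_of u) u := proj2_sig (cid (graded_dec_exists u)).

Definition graded_lift (u : B) : C := \sum_(p <- dec_of u) Psi p.1 p.2.

Lemma graded_liftE l u : graded_dec l u -> graded_lift u = \sum_(p <- l) Psi p.1 p.2.
Proof. exact: sum_dec_eq (dec_ofP u). Qed.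

Lemma graded_lift_homog i u : G i u -> graded_lift u = Psi i u.
Proof.
move=> Gu; rewrite (@graded_liftE [:: (i, u)]) ?big_seq1 //.
by split; [move=> p /[!inE] /eqP -> | rewrite big_seq1].
Qed.

Lemma graded_lift_klinear : klinear graded_lift.
Proof.
move=> a x y; rewrite (graded_liftE (graded_decZD a (dec_ofP x) (dec_ofP y))).
rewrite big_cat big_map /= /graded_lift scaler_sumr; congr (_ + _).
by apply: eq_bigr => p _; rewrite (klinearZ (Psi_linear _)).
Qed.

End Lift.

Lemma graded_bilinear_ext (D : pred int) (C : lmodType k) (F1 F2 : B -> B -> C) :
  (forall i x, G i x -> ~~ D i -> x = 0) ->
  (forall x, klinear (F1 x)) -> (forall y, klinear (F1^~ y)) ->
  (forall x, klinear (F2 x)) -> (forall y, klinear (F2^~ y)) ->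
  (forall i j x y, D i -> D j -> G i x -> G j y -> F1 x y = F2 x y) ->
  forall x y, F1 x y = F2 x y.
Proof.
move=> supp L1 R1 L2 R2 eqF x y.
have [l [Gl ->]] := graded_dec_exists x; have [l' [Gl' ->]] := graded_dec_exists y.
rewrite (klinear_sum (R1 _)) (klinear_sum (R2 _)); apply: eq_big_seq => p pl.
rewrite (klinear_sum (L1 _)) (klinear_sum (L2 _)); apply: eq_big_seq => q ql.
have [Dp|nDp] := boolP (D p.1); last first.
  by rewrite (supp _ _ (Gl p pl) nDp) (klinear0 (R1 _)) (klinear0 (R2 _)).
have [Dq|nDq] := boolP (D q.1); last first.
  by rewrite (supp _ _ (Gl' q ql) nDq) (klinear0 (L1 _)) (klinear0 (L2 _)).
exact: eqF Dp Dq (Gl p pl) (Gl' q ql).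
Qed.

Lemma in_max_idealP u : in_max_ideal G u <-> has_dec G (fun i _ => 0 < i) u.
Proof.
split=> [[s [f [s_pos Gf ->]]] | [l [Gl ->] l_pos]].
  exists [seq (i, f i) | i <- s]; last by move=> p /mapP [i /s_pos ? ->].
  by split; [move=> p /mapP [i _ ->] | rewrite big_map].
have ls p : p \in l -> p.1 \in undup [seq q.1 | q <- l] by move=> pl; rewrite mem_undup map_f.
exists (undup [seq p.1 | p <- l]), (component l); split.
- by move=> n /[!mem_undup] /mapP [p /l_pos ? ->].
- by move=> n; apply: (graded_component graded_subspace).
- exact: sum_by_degree (undup_uniq _) ls.
Qed.

Lemma in_max_ideal_homog i u : 0 < i -> G i u -> in_max_ideal G u.
Proof. by move=> i_pos Gu; apply/in_max_idealP; apply: has_dec_homog Gu i_pos. Qed.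

Lemma in_max_ideal0 : in_max_ideal G 0.
Proof. by apply/in_max_idealP; apply: has_dec0. Qed.

Lemma in_max_idealD u v : in_max_ideal G u -> in_max_ideal G v -> in_max_ideal G (u + v).
Proof. by move=> /in_max_idealP Mu /in_max_idealP Mv; apply/in_max_idealP; apply: has_decD. Qed.

Lemma in_max_idealZ (a : k) u : in_max_ideal G u -> in_max_ideal G (a *: u).
Proof.
by move=> /in_max_idealP Mu; apply/in_max_idealP; exact: (has_decZ graded_subspace _ Mu).
Qed.

Lemma in_max_idealB u v : in_max_ideal G u -> in_max_ideal G v -> in_max_ideal G (u - v).
Proof. by move=> Mu Mv; rewrite -scaleN1r; apply: in_max_idealD Mu (in_max_idealZ _ Mv). Qed.

Lemma in_max_ideal_sum (I : eqType) (s : seq I) (F : I -> B) :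
  (forall i, i \in s -> in_max_ideal G (F i)) -> in_max_ideal G (\sum_(i <- s) F i).
Proof.
move=> MF; rewrite big_seq.
by apply: big_ind => //; [exact: in_max_ideal0 | exact: in_max_idealD].
Qed.

Lemma in_max_idealM u v : in_max_ideal G u -> in_max_ideal G v -> in_max_ideal G (u * v).
Proof.
move=> /in_max_idealP Mu /in_max_idealP Mv; apply/in_max_idealP.
by apply: (has_decM graded_mul _ Mu Mv) => i j x y _ _; apply: addr_gt0.
Qed.

Lemma in_max_ideal_deg0 u : in_max_ideal G u -> G 0 u -> u = 0.
Proof.
move=> /in_max_idealP Mu Gu.
by apply: (has_dec_homog_ind (Q := eq^~ 0) _ _ _ Mu Gu) => // x y -> ->; rewrite addr0.
Qed.

Lemma in_max_ideal_sq0 : in_max_ideal_sq G 0.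
Proof. by exists [::]; rewrite big_nil. Qed.

Lemma in_max_ideal_sqD u v :
  in_max_ideal_sq G u -> in_max_ideal_sq G v -> in_max_ideal_sq G (u + v).
Proof.
move=> [l [Ml ->]] [l' [Ml' ->]]; exists (l ++ l'); rewrite big_cat; split=> //.
by move=> p /[!mem_cat] /orP [/Ml|/Ml'].
Qed.

Lemma in_max_ideal_sqZ (a : k) u : in_max_ideal_sq G u -> in_max_ideal_sq G (a *: u).
Proof.
move=> [l [Ml ->]]; exists [seq (a *: p.1, p.2) | p <- l]; split.
  by move=> p /mapP [q /Ml [Mq1 Mq2] ->]; split=> //; apply: in_max_idealZ.
by rewrite big_map scaler_sumr; apply: eq_bigr => p _; rewrite scalerAl.
Qed.

Lemma in_max_ideal_sqM u v :
  in_max_ideal G u -> in_max_ideal G v -> in_max_ideal_sq G (u * v).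
Proof. by move=> Mu Mv; exists [:: (u, v)]; rewrite big_seq1; split=> // p /[!inE] /eqP ->. Qed.

Lemma in_max_ideal_sq_sum (I : eqType) (s : seq I) (F : I -> B) :
  (forall i, i \in s -> in_max_ideal_sq G (F i)) -> in_max_ideal_sq G (\sum_(i <- s) F i).
Proof.
move=> MF; rewrite big_seq.
by apply: big_ind => //; [exact: in_max_ideal_sq0 | exact: in_max_ideal_sqD].
Qed.

Lemma in_max_ideal_sq_sub u : in_max_ideal_sq G u -> in_max_ideal G u.
Proof.
move=> [l [Ml ->]]; rewrite big_seq; apply: big_ind.
- exact: in_max_ideal0.
- exact: in_max_idealD.
- by move=> p /Ml [M1 M2]; apply: in_max_idealM.
Qed.

End GradedAlgebra.

(** * Poisson brackets and enveloping relations *)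

Section PoissonBracket.
Variables (k : fieldType) (A : comAlgType k) (br : A -> A -> A).
Hypothesis br_Poisson : is_Poisson_bracket br.

Lemma bracket_klinearl z : klinear (br^~ z).
Proof. by case: br_Poisson => brL _ _ _ _ a x y; apply: brL. Qed.

Lemma bracket_klinearr z : klinear (br z).
Proof. by case: br_Poisson => _ brR _ _ _ a x y; apply: brR. Qed.

Lemma bracketC x y : br x y = - br y x.
Proof.
case: br_Poisson => _ _ brxx _ _; apply/eqP; rewrite -addr_eq0.
have := brxx (x + y).
rewrite (klinearD (bracket_klinearl _)) !(klinearD (bracket_klinearr _)) !brxx.
by rewrite add0r addr0 => /eqP.
Qed.

Lemma bracket1l y : br 1 y = 0.
Proof.
case: br_Poisson => _ _ _ _ /(_ 1 1 y); rewrite !mulr1 !mul1r => E.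
by apply: (@addrI _ (br 1 y)); rewrite addr0 -E.
Qed.

Lemma bracket1r y : br y 1 = 0.
Proof. by rewrite bracketC bracket1l oppr0. Qed.

End PoissonBracket.

Section EnvelopingRelations.
Variables (k : fieldType) (A : comAlgType k) (br : A -> A -> A) (B : algType k)
  (m h : A -> B).
Hypothesis relB : PEA_relations br m h.

Lemma PEA_m_klinear : klinear m. Proof. by case: relB => -[]. Qed.
Lemma PEA_h_klinear : klinear h. Proof. by case: relB => -[]. Qed.
Lemma PEA_mM x y : m (x * y) = m x * m y. Proof. by case: relB => -[]. Qed.
Lemma PEA_hbracket x y : h (br x y) = h x * h y - h y * h x. Proof. by case: relB => -[]. Qed.
Lemma PEA_hM x y : h (x * y) = m y * h x + m x * h y. Proof. by case: relB => _ []. Qed.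
Lemma PEA_mbracket x y : m (br x y) = h x * m y - m y * h x. Proof. by case: relB => _ []. Qed.
Lemma PEA_m1 : m 1 = 1. Proof. by case: relB => _ []. Qed.

Lemma PEA_h1 : h 1 = 0.
Proof.
have := PEA_hM 1 1; rewrite mulr1 PEA_m1 mul1r => E.
by apply: (@addrI _ (h 1)); rewrite addr0 -E.
Qed.

End EnvelopingRelations.

Section RelationsFromHomogeneous.
Variables (k : fieldType) (A : comAlgType k) (br : A -> A -> A) (GA : int -> A -> Prop).
Hypotheses (br_Poisson : is_Poisson_bracket br) (GA_graded : Zgraded GA).
Variables (B : algType k) (m h : A -> B) (D : pred int).
Hypotheses (m_linear : klinear m) (h_linear : klinear h)
  (GA_supp : forall i x, GA i x -> ~~ D i -> x = 0).

Let brL := bracket_klinearl br_Poisson.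
Let brR := bracket_klinearr br_Poisson.

Lemma PEA_mM_homog :
  (forall i j x y, D i -> D j -> GA i x -> GA j y -> m (x * y) = m x * m y) ->
  forall x y, m (x * y) = m x * m y.
Proof.
move=> homog; apply: (graded_bilinear_ext GA_graded GA_supp
  (F1 := fun x y : A => m (x * y)) (F2 := fun x y : A => m x * m y)) homog.
- by move=> x; apply: klinear_comp m_linear (klinear_mull x).
- by move=> y; apply: klinear_comp m_linear (klinear_mulr y).
- by move=> x; apply: klinear_mull_comp.
- by move=> y; apply: klinear_mulr_comp.
Qed.

Lemma PEA_hbracket_homog :
  (forall i j x y, D i -> D j -> GA i x -> GA j y -> h (br x y) = h x * h y - h y * h x) ->
  forall x y, h (br x y) = h x * h y - h y * h x.
Proof.
move=> homog; apply: (graded_bilinear_ext GA_graded GA_supp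
  (F1 := fun x y : A => h (br x y)) (F2 := fun x y : A => h x * h y - h y * h x)) homog.
- by move=> x; apply: klinear_comp h_linear (brR x).
- by move=> y; apply: klinear_comp h_linear (brL y).
- by move=> x; apply: klinear_sub; [apply: klinear_mull_comp | apply: klinear_mulr_comp].
- by move=> y; apply: klinear_sub; [apply: klinear_mulr_comp | apply: klinear_mull_comp].
Qed.

Lemma PEA_hM_homog :
  (forall i j x y, D i -> D j -> GA i x -> GA j y -> h (x * y) = m y * h x + m x * h y) ->
  forall x y, h (x * y) = m y * h x + m x * h y.
Proof.
move=> homog; apply: (graded_bilinear_ext GA_graded GA_supp
  (F1 := fun x y : A => h (x * y)) (F2 := fun x y : A => m y * h x + m x * h y)) homog.
- by move=> x; apply: klinear_comp h_linear (klinear_mull x).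
- by move=> y; apply: klinear_comp h_linear (klinear_mulr y).
- by move=> x; apply: klinear_add; [apply: klinear_mulr_comp | apply: klinear_mull_comp].
- by move=> y; apply: klinear_add; [apply: klinear_mull_comp | apply: klinear_mulr_comp].
Qed.

Lemma PEA_mbracket_homog :
  (forall i j x y, D i -> D j -> GA i x -> GA j y -> m (br x y) = h x * m y - m y * h x) ->
  forall x y, m (br x y) = h x * m y - m y * h x.
Proof.
move=> homog; apply: (graded_bilinear_ext GA_graded GA_supp
  (F1 := fun x y : A => m (br x y)) (F2 := fun x y : A => h x * m y - m y * h x)) homog.
- by move=> x; apply: klinear_comp m_linear (brR x).
- by move=> y; apply: klinear_comp m_linear (brL y).
- by move=> x; apply: klinear_sub; [apply: klinear_mull_comp | apply: klinear_mulr_comp].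
- by move=> y; apply: klinear_sub; [apply: klinear_mulr_comp | apply: klinear_mull_comp].
Qed.

Lemma PEA_relations_homog : m 1 = 1 ->
  (forall i j x y, D i -> D j -> GA i x -> GA j y -> [/\
     m (x * y) = m x * m y, h (br x y) = h x * h y - h y * h x,
     h (x * y) = m y * h x + m x * h y & m (br x y) = h x * m y - m y * h x]) ->
  PEA_relations br m h.
Proof.
move=> m1 homog; split; split=> //.
- by apply: PEA_mM_homog => i j x y Di Dj Gx Gy; case: (homog i j x y).
- by apply: PEA_hbracket_homog => i j x y Di Dj Gx Gy; case: (homog i j x y).
- by apply: PEA_hM_homog => i j x y Di Dj Gx Gy; case: (homog i j x y).
- by apply: PEA_mbracket_homog => i j x y Di Dj Gx Gy; case: (homog i j x y).
Qed.

End RelationsFromHomogeneous.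

(** * The grading of U(A) *)

Section Grading.
Variables (k : fieldType) (A : comAlgType k) (br : A -> A -> A) (U : algType k)
  (m h : A -> U).
Hypotheses (br_Poisson : is_Poisson_bracket br) (envU : is_Poisson_enveloping br m h).
Variables (GA : int -> A -> Prop) (d : int).
Hypotheses (GA_graded : Zgraded GA) (br_homog : bracket_homog br GA d).

Let relU : PEA_relations br m h := envU.1.
Let mL := PEA_m_klinear relU.
Let hL := PEA_h_klinear relU.

Let m_monomial_linear i : klinear (fun x => monomial i (m x)).
Proof. exact: klinear_comp (@monomial_klinear _ _ i) mL. Qed.
Let h_monomial_linear i : klinear (fun x => monomial (i + d) (h x)).
Proof. exact: klinear_comp (@monomial_klinear _ _ _) hL. Qed.

Definition m_laurent : A -> endo U := graded_lift GA_graded (fun i x => monomial i (m x)).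
Definition h_laurent : A -> endo U := graded_lift GA_graded (fun i x => monomial (i + d) (h x)).

Lemma m_laurent_homog i x : GA i x -> m_laurent x = monomial i (m x).
Proof. exact: (graded_lift_homog GA_graded m_monomial_linear). Qed.

Lemma h_laurent_homog i x : GA i x -> h_laurent x = monomial (i + d) (h x).
Proof. exact: (graded_lift_homog GA_graded h_monomial_linear). Qed.

Lemma PEA_relations_laurent : PEA_relations br m_laurent h_laurent.
Proof.
have monoL i := @monomial_klinear _ U i.
apply: (PEA_relations_homog (D := predT) br_Poisson GA_graded) => //.
- exact: (graded_lift_klinear GA_graded m_monomial_linear).
- exact: (graded_lift_klinear GA_graded h_monomial_linear).
- by rewrite (m_laurent_homog (graded_one GA_graded)) (PEA_m1 relU) monomial01.
move=> i j x y _ _ Gx Gy; have Gxy := graded_mul GA_graded Gx Gy; have Gbr := br_homog Gx Gy.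
rewrite (m_laurent_homog Gx) (m_laurent_homog Gy) (h_laurent_homog Gx) (h_laurent_homog Gy).
rewrite (m_laurent_homog Gxy) (h_laurent_homog Gxy) (m_laurent_homog Gbr) (h_laurent_homog Gbr).
rewrite !monomialM (PEA_mM relU) (PEA_hbracket relU) (PEA_hM relU) (PEA_mbracket relU).
rewrite !(klinearB (monoL _)) (klinearD (monoL _)).
by split; [| congr (_ - _) | congr (_ + _) | congr (_ - _)]; congr (monomial _ _); ring.
Qed.

Let grading_map_spec : exists phi : U -> endo U,
  [/\ alg_morph phi, forall x, phi (m x) = m_laurent x & forall x, phi (h x) = h_laurent x].
Proof. by have [phi [phiA phim phih _]] := envU.2 _ _ _ PEA_relations_laurent; exists phi. Qed.

(* [grading_map u] is [\sum_i u_i t^i] in [U[t, t^-1]] *)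
Definition grading_map : U -> endo U := proj1_sig (cid grading_map_spec).

Let grading_mapP := proj2_sig (cid grading_map_spec).
Let phiL : klinear grading_map. Proof. by case: grading_mapP => -[]. Qed.
Let phiM u v : grading_map (u * v) = grading_map u * grading_map v.
Proof. by case: grading_mapP => -[]. Qed.
Let phi1 : grading_map 1 = 1. Proof. by case: grading_mapP => -[]. Qed.
Let phim x : grading_map (m x) = m_laurent x. Proof. by case: grading_mapP. Qed.
Let phih x : grading_map (h x) = h_laurent x. Proof. by case: grading_mapP. Qed.

Definition Ugrading (i : int) (u : U) : Prop := grading_map u = monomial i u.

Lemma Ugrading_subspace i : is_subspace (Ugrading i).
Proof.
split=> [|a u v]; first by rewrite /Ugrading (klinear0 phiL) (klinear0 (@monomial_klinear _ _ i)).
by rewrite /Ugrading phiL monomial_klinear => -> ->.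
Qed.

Lemma Ugrading_mul i j u v : Ugrading i u -> Ugrading j v -> Ugrading (i + j) (u * v).
Proof. by rewrite /Ugrading phiM => -> ->; rewrite monomialM. Qed.

Lemma Ugrading_one : Ugrading 0 1.
Proof. by rewrite /Ugrading phi1 monomial01. Qed.

Lemma Ugrading_degrees : PEA_degrees m h GA Ugrading d.
Proof. by move=> i x Gx; rewrite /Ugrading phim phih (m_laurent_homog Gx) (h_laurent_homog Gx). Qed.

Lemma Ugrading_has_dec (P : int -> U -> Prop) :
  P 0 1 -> (forall i (a : k) v, P i v -> P i (a *: v)) ->
  (forall i j u v, Ugrading i u -> Ugrading j v -> P i u -> P j v -> P (i + j) (u * v)) ->
  (forall i x, GA i x -> P i (m x) /\ P (i + d) (h x)) ->
  forall u, has_dec Ugrading P u.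
Proof.
move=> P1 PZ PM Pgen u; apply: (enveloping_ind envU).
- exact: has_dec_homog Ugrading_one P1.
- exact: has_decD.
- by move=> a v; apply: (@has_decZ _ _ _ Ugrading_subspace P a v (fun i => PZ i a)).
- by move=> v w; apply: (@has_decM _ _ _ Ugrading_mul P v w PM).
- move=> x; have [l [Gl ->]] := graded_dec_exists GA_graded x.
  rewrite (klinear_sum mL); apply: has_dec_sum => p /Gl Gp.
  by apply: has_dec_homog (proj1 (Ugrading_degrees Gp)) (proj1 (Pgen _ _ Gp)).
- move=> x; have [l [Gl ->]] := graded_dec_exists GA_graded x.
  rewrite (klinear_sum hL); apply: has_dec_sum => p /Gl Gp.
  by apply: has_dec_homog (proj2 (Ugrading_degrees Gp)) (proj2 (Pgen _ _ Gp)).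
Qed.

Lemma Ugrading_graded : Zgraded Ugrading.
Proof.
split.
- exact: Ugrading_subspace.
- move=> u; have [l [Gl ->] _] := @Ugrading_has_dec (fun _ _ => True) I
    (fun _ _ _ _ => I) (fun _ _ _ _ _ _ _ _ => I) (fun _ _ _ => conj I I) u.
  exists (undup [seq p.1 | p <- l]), (component l); split.
    by move=> n; apply: (graded_component Ugrading_subspace).
  by apply: sum_by_degree (undup_uniq _) _ => p pl; rewrite mem_undup map_f.
- move=> s f s_uniq Gf f0 i i_s.
  have := congr1 (fun X : endo U => X delta i) (congr1 grading_map f0).
  rewrite (klinear_sum phiL) (klinear0 phiL) endo_sumE endo_zeroE.
  under eq_bigr => j _ do rewrite (Gf j) monomial_delta.
  rewrite (bigD1_seq i) //= eqxx big1 ?addr0 // => j /negPf.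
  by rewrite eq_sym => ->.
- exact: Ugrading_mul.
- exact: Ugrading_one.
Qed.

End Grading.

(** * Connectedness *)

Lemma connected_graded (k : fieldType) (B : algType k) (G : int -> B -> Prop) :
  connected_Ngraded G -> Zgraded G.
Proof. by case. Qed.

Section ConnectedAt.
Variables (k : fieldType) (B : algType k).

Definition connected_at (i : int) (v : B) : Prop :=
  (i < 0 -> v = 0) /\ (i = 0 -> exists c : k, v = c *: 1).

Lemma connected_at0 i : connected_at i 0.
Proof. by split=> // _; exists 0; rewrite scale0r. Qed.

Lemma connected_at1 : connected_at 0 1.
Proof. by split=> // _; exists 1; rewrite scale1r. Qed.

Lemma connected_atZ i (a : k) v : connected_at i v -> connected_at i (a *: v).
Proof.
case=> v_neg v_0; split=> [/v_neg ->|/v_0 [c ->]]; first by rewrite scaler0.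
by exists (a * c); rewrite scalerA.
Qed.

Lemma connected_atM i j u v :
  connected_at i u -> connected_at j v -> connected_at (i + j) (u * v).
Proof.
case=> u_neg u_0 [v_neg v_0].
have [/u_neg ->|i_ge0] := ltrP i 0; first by rewrite mul0r; apply: connected_at0.
have [/v_neg ->|j_ge0] := ltrP j 0; first by rewrite mulr0; apply: connected_at0.
split=> [|ij0]; first by lia.
have [c ->] := u_0 (ltac:(lia)); have [c' ->] := v_0 (ltac:(lia)).
by exists (c * c'); rewrite -scalerAl mul1r scalerA.
Qed.

End ConnectedAt.

Section Connected.
Variables (k : fieldType) (A : comAlgType k) (br : A -> A -> A) (U : algType k)
  (m h : A -> U).
Hypotheses (br_Poisson : is_Poisson_bracket br) (envU : is_Poisson_enveloping br m h).
Variables (GA : int -> A -> Prop) (d : int).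
Hypotheses (GA_conn : connected_Ngraded GA) (br_homog : bracket_homog br GA d)
  (d_ge0 : 0 <= d).

Let GA_graded := connected_graded GA_conn.
Local Notation GU := (Ugrading br_Poisson envU GA_graded br_homog).
Let GU_graded : Zgraded GU := Ugrading_graded br_Poisson envU GA_graded br_homog.
Let relU : PEA_relations br m h := envU.1.

Lemma connected_at_generators i x :
  GA i x -> connected_at i (m x) /\ connected_at (i + d) (h x).
Proof.
case: GA_conn => _ GA_neg GA_0 Gx.
have [i_neg|i_ge0] := ltrP i 0.
  by rewrite (GA_neg _ _ i_neg Gx) (klinear0 (PEA_m_klinear relU)) (klinear0 (PEA_h_klinear relU));
    split; apply: connected_at0.
split; split=> [|i0]; try lia.
- move: Gx; rewrite i0 => /GA_0 [c ->].
  by exists c; rewrite (klinearZ (PEA_m_klinear relU)) (PEA_m1 relU).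
- have i_eq0 : i = 0 by lia.
  move: Gx; rewrite i_eq0 => /GA_0 [c ->].
  by exists 0; rewrite (klinearZ (PEA_h_klinear relU)) (PEA_h1 relU) scaler0 scale0r.
Qed.

Lemma Ugrading_connected_at u : has_dec GU (@connected_at _ _) u.
Proof.
apply: Ugrading_has_dec => [||i j u' v' _ _|].
- exact: connected_at1.
- exact: connected_atZ.
- exact: connected_atM.
- exact: connected_at_generators.
Qed.

Lemma Ugrading_connected : connected_Ngraded GU.
Proof.
split=> // [i u i_neg Gu | u].
  apply: (has_dec_homog_ind GU_graded (Q := eq^~ 0) _ _ _ (Ugrading_connected_at u) Gu).
  - by [].
  - by move=> x y -> ->; rewrite addr0.
  - by move=> v [/(_ i_neg)].
split=> [Gu | [c ->]]; last first.
  exact: (subspaceZ (graded_subspace GU_graded 0) _ (graded_one GU_graded)).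
apply: (has_dec_homog_ind GU_graded (Q := fun v => exists c : k, v = c%:A) _ _ _
  (Ugrading_connected_at u) Gu).
- by exists 0; rewrite scale0r.
- by move=> x y [c ->] [c' ->]; exists (c + c'); rewrite scalerDl.
- by move=> v [_ /(_ erefl)].
Qed.

End Connected.

(** * Minimal generation *)

Lemma mul_scalar_add (k : fieldType) (R : algType k) (c c' : k) (w w' : R) :
  (c%:A + w) * (c'%:A + w') = (c * c')%:A + (c *: w' + c' *: w) + w * w'.
Proof.
by rewrite mulrDl !mulrDr mulr_algl mulr_algr -scalerA mulr_algl !addrA.
Qed.

Section Spanning.
Variables (k : fieldType) (A : comAlgType k) (br : A -> A -> A) (U : algType k)
  (m h : A -> U).
Hypotheses (br_Poisson : is_Poisson_bracket br) (envU : is_Poisson_enveloping br m h).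
Variables (GA : int -> A -> Prop) (d : int).
Hypotheses (GA_conn : connected_Ngraded GA) (br_homog : bracket_homog br GA d)
  (d_ge0 : 0 <= d).

Let GA_graded := connected_graded GA_conn.
Local Notation GU := (Ugrading br_Poisson envU GA_graded br_homog).
Let GU_graded : Zgraded GU := Ugrading_graded br_Poisson envU GA_graded br_homog.
Let GU_degrees : PEA_degrees m h GA GU d :=
  Ugrading_degrees br_Poisson envU GA_graded br_homog.
Let relU : PEA_relations br m h := envU.1.
Let mL := PEA_m_klinear relU.
Let hL := PEA_h_klinear relU.
Let GA1 := graded_subspace GA_graded 1.

Lemma generators_in_max_ideal i x : 0 < i -> GA i x ->
  in_max_ideal GU (m x) /\ in_max_ideal GU (h x).
Proof.
move=> i_pos Gx; have [Gm Gh] := GU_degrees Gx.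
split; first exact: (in_max_ideal_homog GU_graded i_pos Gm).
by apply: (in_max_ideal_homog GU_graded _ Gh); rewrite ltr_wpDr.
Qed.

Lemma degree1_generators_in_max_ideal x y : GA 1 x -> GA 1 y ->
  in_max_ideal GU (m x + h y).
Proof.
move=> Gx Gy; apply: (in_max_idealD GU_graded).
  exact: (generators_in_max_ideal ltr01 Gx).1.
exact: (generators_in_max_ideal ltr01 Gy).2.
Qed.

Lemma image_in_max_ideal x : in_max_ideal GA x ->
  in_max_ideal GU (m x) /\ in_max_ideal GU (h x).
Proof.
move=> /(in_max_idealP GA_graded) [l [Gl ->] l_pos].
rewrite (klinear_sum mL) (klinear_sum hL).
by split; apply: (in_max_ideal_sum GU_graded) => p pl;
  have [] := generators_in_max_ideal (l_pos p pl) (Gl p pl).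
Qed.

Lemma image_in_max_ideal_sq z : in_max_ideal_sq GA z ->
  in_max_ideal_sq GU (m z) /\ in_max_ideal_sq GU (h z).
Proof.
move=> [l [Ml ->]]; rewrite (klinear_sum mL) (klinear_sum hL).
split; apply: in_max_ideal_sq_sum => p /Ml [/image_in_max_ideal [Mm1 Mh1]];
  move=> /image_in_max_ideal [Mm2 Mh2].
- by rewrite (PEA_mM relU); apply: in_max_ideal_sqM.
- by rewrite (PEA_hM relU); apply: in_max_ideal_sqD; apply: in_max_ideal_sqM.
Qed.

Lemma degree1_decomposition a : in_gen_subalg (GA 1) a ->
  exists c x z, [/\ GA 1 x, in_max_ideal_sq GA z & a = c *: 1 + x + z].
Proof.
move=> /(_ (fun a => exists c x z, [/\ GA 1 x, in_max_ideal_sq GA z & a = c *: 1 + x + z])).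
have M1 x : GA 1 x -> in_max_ideal GA x by exact: (in_max_ideal_homog GA_graded ltr01).
apply; last first.
  by move=> x Gx; exists 0, x, 0; rewrite scale0r add0r addr0; split=> //; apply: in_max_ideal_sq0.
split.
- exists 0, 0, 0; rewrite scale0r !addr0.
  by split; [apply: (subspace0 GA1) | apply: in_max_ideal_sq0 |].
- exists 1, 0, 0; rewrite scale1r !addr0.
  by split; [apply: (subspace0 GA1) | apply: in_max_ideal_sq0 |].
- move=> a' _ _ [c [x [z [Gx Mz ->]]]] [c' [x' [z' [Gx' Mz' ->]]]].
  exists (a' * c + c'), (a' *: x + x'), (a' *: z + z'); split.
  + by apply: (subspaceD GA1); [apply: (subspaceZ GA1)|].
  + by apply: in_max_ideal_sqD; [apply: (in_max_ideal_sqZ GA_graded)|].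
  + rewrite scalerDl -scalerA !scalerDr.
    by move: (a' *: (c *: 1)) (a' *: x) (a' *: z) (c' *: 1) => p q r t; ring.
- move=> _ _ [c [x [z [Gx Mz ->]]]] [c' [x' [z' [Gx' Mz' ->]]]].
  have Mz1 := in_max_ideal_sq_sub GA_graded Mz; have Mz1' := in_max_ideal_sq_sub GA_graded Mz'.
  exists (c * c'), (c *: x' + c' *: x),
    (x * x' + x * z' + z * x' + z * z' + c *: z' + c' *: z); split.
  + by apply: (subspaceD GA1); apply: (subspaceZ GA1).
  + have Mx := M1 _ Gx; have Mx' := M1 _ Gx'.
    repeat apply: in_max_ideal_sqD; try exact: in_max_ideal_sqM.
    - by apply: (in_max_ideal_sqZ GA_graded).
    - by apply: (in_max_ideal_sqZ GA_graded).
  + have algM : (c * c')%:A = c%:A * c'%:A :> A by rewrite mulr_algl scalerA.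
    rewrite algM -[c *: x']mulr_algl -[c' *: x]mulr_algl -[c *: z']mulr_algl -[c' *: z]mulr_algl.
    by move: c%:A c'%:A => C C'; ring.
Qed.

Definition mh_combination (c : k) (x y : A) : U := c%:A + (m x + h y).

Lemma mh_combinationD c c' x x' y y' :
  mh_combination (c + c') (x + x') (y + y') = mh_combination c x y + mh_combination c' x' y'.
Proof.
rewrite /mh_combination (klinearD mL) (klinearD hL) scalerDl.
by rewrite [m x + _ + _]addrACA [c%:A + _ + _]addrACA.
Qed.

Lemma mh_combinationZ (a c : k) x y :
  mh_combination (a * c) (a *: x) (a *: y) = a *: mh_combination c x y.
Proof. by rewrite /mh_combination (klinearZ mL) (klinearZ hL) -scalerA -!scalerDr. Qed.

Definition spanned_mod_sq (u : U) : Prop :=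
  exists c x y, [/\ GA 1 x, GA 1 y & in_max_ideal_sq GU (u - mh_combination c x y)].

Lemma spanned_mod_sq1 : spanned_mod_sq 1.
Proof.
exists 1, 0, 0; rewrite /mh_combination (klinear0 mL) (klinear0 hL) scale1r !addr0 subrr.
by split; [apply: (subspace0 GA1) | apply: (subspace0 GA1) | apply: in_max_ideal_sq0].
Qed.

Lemma spanned_mod_sqD u v : spanned_mod_sq u -> spanned_mod_sq v -> spanned_mod_sq (u + v).
Proof.
move=> [c [x [y [Gx Gy qu]]]] [c' [x' [y' [Gx' Gy' qv]]]].
exists (c + c'), (x + x'), (y + y'); split; [exact: (subspaceD GA1) .. |].
by rewrite mh_combinationD opprD addrACA; apply: in_max_ideal_sqD.
Qed.

Lemma spanned_mod_sqZ (a : k) u : spanned_mod_sq u -> spanned_mod_sq (a *: u).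
Proof.
move=> [c [x [y [Gx Gy qu]]]].
exists (a * c), (a *: x), (a *: y); split; [exact: (subspaceZ GA1) .. |].
by rewrite mh_combinationZ -scalerBr; apply: (in_max_ideal_sqZ GU_graded).
Qed.

Lemma spanned_mod_sq_sub_scalar c x y u :
  GA 1 x -> GA 1 y -> in_max_ideal_sq GU (u - mh_combination c x y) ->
  in_max_ideal GU (u - c%:A).
Proof.
move=> Gx Gy q; have := in_max_ideal_sq_sub GU_graded q.
move=> /(in_max_idealD GU_graded)/(_ (degree1_generators_in_max_ideal Gx Gy)).
by rewrite /mh_combination opprD [u + (_ + _)]addrA addrNK.
Qed.

(* With [u = c + W] and [v = c' + W'] for [W, W'] in the maximal ideal, [u v]
   is [c c' + c W' + c' W] up to [W W'], which lies in its square. *)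
Lemma spanned_mod_sqM u v : spanned_mod_sq u -> spanned_mod_sq v -> spanned_mod_sq (u * v).
Proof.
move=> [c [x [y [Gx Gy qu]]]] [c' [x' [y' [Gx' Gy' qv]]]].
have Mu := spanned_mod_sq_sub_scalar Gx Gy qu.
have Mv := spanned_mod_sq_sub_scalar Gx' Gy' qv.
exists (c * c'), (c *: x' + c' *: x), (c *: y' + c' *: y).
split; [by apply: (subspaceD GA1); apply: (subspaceZ GA1) .. |].
have -> : mh_combination (c * c') (c *: x' + c' *: x) (c *: y' + c' *: y) =
    (c * c')%:A + (c *: (m x' + h y') + c' *: (m x + h y)).
  by rewrite /mh_combination !(klinearD mL, klinearD hL, klinearZ mL, klinearZ hL) !scalerDr
    addrACA.
rewrite -{1}(subrK c%:A u) -{1}(subrK c'%:A v) ![_ - _ + _%:A]addrC mul_scalar_add.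
set a := (c * c')%:A; set W := u - c%:A; set W' := v - c'%:A.
set w := m x + h y; set w' := m x' + h y'.
rewrite [a + _]addrC addrAC addrKA opprD addrACA -!scalerBr.
apply: in_max_ideal_sqD; last exact: in_max_ideal_sqM.
apply: in_max_ideal_sqD; apply: (in_max_ideal_sqZ GU_graded).
  by rewrite /W' /w' -addrA -opprD.
by rewrite /W /w -addrA -opprD.
Qed.

Lemma spanned_mod_sq_generators x : in_gen_subalg (GA 1) x ->
  spanned_mod_sq (m x) /\ spanned_mod_sq (h x).
Proof.
move=> /degree1_decomposition [c [x1 [z [Gx1 Mz ->]]]].
have [Mmz Mhz] := image_in_max_ideal_sq Mz.
split; [exists c, x1, 0 | exists 0, 0, x1]; split=> //; try exact: (subspace0 GA1).
  rewrite /mh_combination (klinear0 hL) addr0 !(klinearD mL) (klinearZ mL) (PEA_m1 relU).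
  by rewrite addrC addKr.
rewrite /mh_combination scale0r (klinear0 mL) !add0r !(klinearD hL) (klinearZ hL).
by rewrite (PEA_h1 relU) scaler0 add0r addrC addKr.
Qed.

Lemma max_ideal_spanned u : (forall a, in_gen_subalg (GA 1) a) -> in_max_ideal GU u ->
  exists x y, [/\ GA 1 x, GA 1 y & in_max_ideal_sq GU (u - (m x + h y))].
Proof.
move=> GA_gen Mu.
have [c [x [y [Gx Gy q]]]] : spanned_mod_sq u.
  move: u {Mu}; apply: (enveloping_ind envU); [exact: spanned_mod_sq1 | exact: spanned_mod_sqD
    | exact: spanned_mod_sqZ | exact: spanned_mod_sqM | |] => x.
    exact: (spanned_mod_sq_generators (GA_gen x)).1.
  exact: (spanned_mod_sq_generators (GA_gen x)).2.
exists x, y; split=> //.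
suff c0 : c%:A = 0 :> U by move: q; rewrite /mh_combination c0 add0r.
apply: (in_max_ideal_deg0 GU_graded); last first.
  exact: (subspaceZ (graded_subspace GU_graded 0) _ (graded_one GU_graded)).
have -> : c%:A = u - (u - mh_combination c x y) - (m x + h y).
  by rewrite subKr /mh_combination addrK.
apply: (in_max_idealB GU_graded); last exact: degree1_generators_in_max_ideal.
exact: (in_max_idealB GU_graded Mu (in_max_ideal_sq_sub GU_graded q)).
Qed.

End Spanning.

Section Independence.
Variables (k : fieldType) (A : comAlgType k) (br : A -> A -> A) (U : algType k)
  (m h : A -> U).
Hypotheses (br_Poisson : is_Poisson_bracket br) (envU : is_Poisson_enveloping br m h).
Variables (GA : int -> A -> Prop) (d : int).
Hypotheses (GA_conn : connected_Ngraded GA) (br_homog : bracket_homog br GA d)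
  (d_ge0 : 0 <= d).

Let GA_graded := connected_graded GA_conn.
Local Notation GU := (Ugrading br_Poisson envU GA_graded br_homog).
Let GU_graded : Zgraded GU := Ugrading_graded br_Poisson envU GA_graded br_homog.

Let GA_neg i x : i < 0 -> GA i x -> x = 0.
Proof. by case: GA_conn => _ + _; apply. Qed.

Let bracket_deg0 i j x y : GA i x -> GA j y -> (i == 0) || (j == 0) -> br x y = 0.
Proof.
case: GA_conn => _ _ GA_0 Gx Gy /orP [/eqP i0|/eqP j0].
  move: Gx; rewrite i0 => /GA_0 [c ->].
  by rewrite (klinearZ (bracket_klinearl br_Poisson _)) (bracket1l br_Poisson) scaler0.
move: Gy; rewrite j0 => /GA_0 [c ->].
by rewrite (klinearZ (bracket_klinearr br_Poisson _)) (bracket1r br_Poisson) scaler0.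
Qed.

Let tmonomial0 (i : int) : tmonomial i (0 : A) = 0.
Proof. exact: klinear0 (tmonomial_klinear i). Qed.

Let tmonomial_m_linear (i : int) : klinear (fun x : A => tmonomial (2 * i) x).
Proof. exact: tmonomial_klinear. Qed.
Let tmonomial_h_linear (i : int) : klinear (fun x : A => if i == 1 then tmonomial 3 x else 0).
Proof. by case: (i == 1); [apply: tmonomial_klinear | move=> a x y; rewrite scaler0 addr0]. Qed.

(* [m_x |-> x_0 + x_1 t^2] and [h_x |-> x_1 t^3] in [A[t]/(t^4)] *)
Definition m_trunc : A -> endo A := graded_lift GA_graded (fun i x => tmonomial (2 * i) x).
Definition h_trunc : A -> endo A :=
  graded_lift GA_graded (fun i x => if i == 1 then tmonomial 3 x else 0).

Lemma m_trunc_homog i x : GA i x -> m_trunc x = tmonomial (2 * i) x.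
Proof. exact: (graded_lift_homog GA_graded tmonomial_m_linear). Qed.

Lemma h_trunc_homog i x : GA i x -> h_trunc x = if i == 1 then tmonomial 3 x else 0.
Proof. exact: (graded_lift_homog GA_graded tmonomial_h_linear). Qed.

Section HomogeneousRelations.
Variables (i j : int) (x y : A).
Hypotheses (i_ge0 : 0 <= i) (j_ge0 : 0 <= j) (Gx : GA i x) (Gy : GA j y).

Let Gxy := graded_mul GA_graded Gx Gy.
Let Gbr := br_homog Gx Gy.

Let trunc_mM : m_trunc (x * y) = m_trunc x * m_trunc y.
Proof.
rewrite (m_trunc_homog Gxy) (m_trunc_homog Gx) (m_trunc_homog Gy).
by rewrite tmonomialM ?mulrDr // pmulr_rge0.
Qed.

Let trunc_hbracket : h_trunc (br x y) = h_trunc x * h_trunc y - h_trunc y * h_trunc x.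
Proof.
rewrite (h_trunc_homog Gbr) (h_trunc_homog Gx) (h_trunc_homog Gy).
have -> : (if i == 1 then tmonomial 3 x else 0) * (if j == 1 then tmonomial 3 y else 0) -
    (if j == 1 then tmonomial 3 y else 0) * (if i == 1 then tmonomial 3 x else 0) = 0.
  by case: (i == 1); case: (j == 1); rewrite ?mul0r ?mulr0 ?subrr // !tmonomialM
    // !tmonomial_eq0 // subrr.
case: ifP => // /eqP ijd1; rewrite (bracket_deg0 Gx Gy) ?tmonomial0 //.
by apply/orP; lia.
Qed.

Let trunc_hM : h_trunc (x * y) = m_trunc y * h_trunc x + m_trunc x * h_trunc y.
Proof.
rewrite (h_trunc_homog Gxy) (h_trunc_homog Gx) (h_trunc_homog Gy).
rewrite (m_trunc_homog Gx) (m_trunc_homog Gy).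
case: (eqVneq i 1) => [i1|i_neq1]; case: (eqVneq j 1) => [j1|j_neq1].
- by rewrite i1 j1 /= !tmonomialM // !tmonomial_eq0 // addr0.
- rewrite i1 mulr0 addr0 tmonomialM ?pmulr_rge0 //.
  have [j0|j_neq0] := eqVneq j 0; first by rewrite j0 mulr0 add0r addr0 eqxx mulrC.
  by rewrite ifF ?tmonomial_eq0 //; apply/eqP; lia.
- rewrite j1 mulr0 add0r tmonomialM ?pmulr_rge0 //.
  have [i0|i_neq0] := eqVneq i 0; first by rewrite i0 mulr0 !add0r eqxx.
  by rewrite ifF ?tmonomial_eq0 //; apply/eqP; lia.
- by rewrite !mulr0 addr0 ifF //; apply/eqP; lia.
Qed.

Let trunc_mbracket : m_trunc (br x y) = h_trunc x * m_trunc y - m_trunc y * h_trunc x.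
Proof.
rewrite (m_trunc_homog Gbr) (h_trunc_homog Gx) (m_trunc_homog Gy).
have [ij0|] := boolP ((i == 0) || (j == 0)).
  rewrite (bracket_deg0 Gx Gy ij0) tmonomial0.
  case: ifP => _; rewrite ?mul0r ?mulr0 ?subrr // !tmonomialM ?pmulr_rge0 //.
  by rewrite [3 + _]addrC [y * x]mulrC subrr.
rewrite negb_or => /andP [/eqP i_neq0 /eqP j_neq0].
rewrite tmonomial_eq0; last by lia.
case: ifP => [/eqP i1|_]; last by rewrite mul0r mulr0 subrr.
by rewrite !tmonomialM ?pmulr_rge0 // [3 + _]addrC [y * x]mulrC subrr.
Qed.

Lemma PEA_relations_trunc_homog : [/\
  m_trunc (x * y) = m_trunc x * m_trunc y,
  h_trunc (br x y) = h_trunc x * h_trunc y - h_trunc y * h_trunc x,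
  h_trunc (x * y) = m_trunc y * h_trunc x + m_trunc x * h_trunc y &
  m_trunc (br x y) = h_trunc x * m_trunc y - m_trunc y * h_trunc x].
Proof. exact: And4 trunc_mM trunc_hbracket trunc_hM trunc_mbracket. Qed.

End HomogeneousRelations.

Lemma PEA_relations_trunc : PEA_relations br m_trunc h_trunc.
Proof.
apply: (PEA_relations_homog (D := >= 0 : pred int) br_Poisson GA_graded).
- exact: (graded_lift_klinear GA_graded tmonomial_m_linear).
- exact: (graded_lift_klinear GA_graded tmonomial_h_linear).
- by move=> i x Gx; rewrite -ltNge => /GA_neg; apply.
- by rewrite (m_trunc_homog (graded_one GA_graded)) mulr0 tmonomial01.
exact: PEA_relations_trunc_homog.
Qed.

Let chi_spec : exists chi : U -> endo A,
  [/\ alg_morph chi, forall x, chi (m x) = m_trunc x & forall x, chi (h x) = h_trunc x].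
Proof. by have [chi [chiA chim chih _]] := envU.2 _ _ _ PEA_relations_trunc; exists chi. Qed.

Definition trunc_map : U -> endo A := proj1_sig (cid chi_spec).

Let trunc_mapP := proj2_sig (cid chi_spec).
Let chiL : klinear trunc_map. Proof. by case: trunc_mapP => -[]. Qed.
Let chiM u v : trunc_map (u * v) = trunc_map u * trunc_map v.
Proof. by case: trunc_mapP => -[]. Qed.
Let chim x : trunc_map (m x) = m_trunc x. Proof. by case: trunc_mapP. Qed.
Let chih x : trunc_map (h x) = h_trunc x. Proof. by case: trunc_mapP. Qed.

Definition t2_divisible (X : endo A) : Prop := exists v w, X = tmonomial 2 v + tmonomial 3 w.

Lemma t2_divisible0 : t2_divisible 0.
Proof. by exists 0, 0; rewrite !tmonomial0 addr0. Qed.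

Lemma t2_divisibleD X Y : t2_divisible X -> t2_divisible Y -> t2_divisible (X + Y).
Proof.
move=> [v [w ->]] [v' [w' ->]]; exists (v + v'), (w + w').
by rewrite !(klinearD (tmonomial_klinear _)) addrACA.
Qed.

Lemma t2_divisibleZ (a : k) X : t2_divisible X -> t2_divisible (a *: X).
Proof.
move=> [v [w ->]]; exists (a *: v), (a *: w).
by rewrite scalerDr !(klinearZ (tmonomial_klinear _)).
Qed.

Lemma t2_divisible_mul X Y : t2_divisible X -> t2_divisible Y -> X * Y = 0.
Proof.
move=> [v [w ->]] [v' [w' ->]].
by rewrite mulrDl !mulrDr !tmonomialM // !tmonomial_eq0 // !addr0.
Qed.

Definition trunc_map_homog (i : int) (v : U) : Prop :=
  connected_at i v /\ (0 < i -> t2_divisible (trunc_map v)).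

Lemma trunc_map_homogM i j u v : trunc_map_homog i u -> trunc_map_homog j v ->
  trunc_map_homog (i + j) (u * v).
Proof.
move=> [Cu Tu] [Cv Tv]; split=> [|ij_pos]; first exact: connected_atM.
have [/(proj1 Cu) ->|i_ge0] := ltrP i 0.
  by rewrite mul0r (klinear0 chiL); apply: t2_divisible0.
have [/(proj1 Cv) ->|j_ge0] := ltrP j 0.
  by rewrite mulr0 (klinear0 chiL); apply: t2_divisible0.
have [i0|i_neq0] := eqVneq i 0.
  have [c ->] := proj2 Cu i0; rewrite -scalerAl mul1r (klinearZ chiL).
  by apply: t2_divisibleZ; apply: Tv; lia.
have [j0|j_neq0] := eqVneq j 0.
  have [c ->] := proj2 Cv j0; rewrite -scalerAr mulr1 (klinearZ chiL).
  by apply: t2_divisibleZ; apply: Tu; lia.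
by rewrite chiM (t2_divisible_mul (Tu _) (Tv _)); [apply: t2_divisible0 | lia ..].
Qed.

Lemma trunc_map_homog_generators i x : GA i x ->
  trunc_map_homog i (m x) /\ trunc_map_homog (i + d) (h x).
Proof.
move=> Gx; have [Cm Ch] := connected_at_generators envU GA_conn d_ge0 Gx.
split; split=> // i_pos.
  rewrite chim (m_trunc_homog Gx).
  have [i1|i_neq1] := eqVneq i 1; first by exists x, 0; rewrite i1 mulr1 tmonomial0 addr0.
  by rewrite tmonomial_eq0; [apply: t2_divisible0 | lia].
rewrite chih (h_trunc_homog Gx); case: ifP => _; last exact: t2_divisible0.
by exists 0, x; rewrite tmonomial0 add0r.
Qed.

Lemma trunc_map_pos_homog i v : 0 < i -> GU i v -> t2_divisible (trunc_map v).
Proof.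
move=> i_pos Gv; have : has_dec GU trunc_map_homog v.
  apply: Ugrading_has_dec => [|j a u [Cu Tu]|j j' u u' _ _|]; last first.
  - exact: trunc_map_homog_generators.
  - exact: trunc_map_homogM.
  - split=> [|j_pos]; first exact: connected_atZ.
    by rewrite (klinearZ chiL); apply: t2_divisibleZ; apply: Tu.
  - by split; [apply: connected_at1 | rewrite ltxx].
move=> /(has_dec_homog_ind GU_graded (Q := fun v => t2_divisible (trunc_map v)) (i := i)).
apply=> //.
- by rewrite (klinear0 chiL); apply: t2_divisible0.
- by move=> u u' Tu Tu'; rewrite (klinearD chiL); apply: t2_divisibleD.
- by move=> u [_]; apply.
Qed.

Lemma trunc_map_max_ideal w : in_max_ideal GU w -> t2_divisible (trunc_map w).
Proof.
move=> /(in_max_idealP GU_graded) [l [Gl ->] l_pos]; rewrite (klinear_sum chiL) big_seq.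
apply: big_ind => [||p pl]; [exact: t2_divisible0 | exact: t2_divisibleD |].
exact: trunc_map_pos_homog (l_pos p pl) (Gl p pl).
Qed.

Lemma trunc_map_max_ideal_sq q : in_max_ideal_sq GU q -> trunc_map q = 0.
Proof.
move=> [l [Ml ->]]; rewrite (klinear_sum chiL) big1_seq // => p /andP [_ /Ml [M1 M2]].
by rewrite chiM; apply: t2_divisible_mul; apply: trunc_map_max_ideal.
Qed.

Lemma max_ideal_sq_independent x y : GA 1 x -> GA 1 y ->
  in_max_ideal_sq GU (m x + h y) -> x = 0 /\ y = 0.
Proof.
move=> Gx Gy /trunc_map_max_ideal_sq; rewrite (klinearD chiL) chim chih.
rewrite (m_trunc_homog Gx) (h_trunc_homog Gy) mulr1 /= => E.
have E2 : tmonomial 2 x delta 2 + tmonomial 3 y delta 2 = 0.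
  exact: (congr1 (fun X : endo A => X delta 2) E).
have E3 : tmonomial 2 x delta 3 + tmonomial 3 y delta 3 = 0.
  exact: (congr1 (fun X : endo A => X delta 3) E).
by move: E2 E3; rewrite !tmonomial_delta //= addr0 add0r.
Qed.

End Independence.

Theorem proposition2p2 (k : fieldType) (A : comAlgType k) (br : A -> A -> A)
    (U : algType k) (m h : A -> U) :
  is_Poisson_bracket br -> affine A -> is_Poisson_enveloping br m h ->
  (* (i) *)
  (forall (GA : int -> A -> Prop) (d : int),
     Zgraded GA -> bracket_homog br GA d ->
     exists GU : int -> U -> Prop, Zgraded GU /\ PEA_degrees m h GA GU d) /\
  (* (ii) *)
  (forall (GA : int -> A -> Prop) (d : int),
     connected_Ngraded GA -> bracket_homog br GA d -> 0 <= d ->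
     exists GU : int -> U -> Prop,
       [/\ Zgraded GU, PEA_degrees m h GA GU d & connected_Ngraded GU]) /\
  (* (iii) *)
  (forall (GA : int -> A -> Prop) (d : int),
     connected_Ngraded GA -> (forall a, in_gen_subalg (GA 1) a) ->
     bracket_homog br GA d -> 0 <= d ->
     exists GU : int -> U -> Prop,
       [/\ Zgraded GU, PEA_degrees m h GA GU d, connected_Ngraded GU &
           minimally_generated_by_m1_h1 m h GA GU]).
Proof.
(* [A] need not be affine. *)
move=> br_Poisson _ envU; split; [|split].
- move=> GA d GA_graded br_homog; exists (Ugrading br_Poisson envU GA_graded br_homog).
  by split; [apply: Ugrading_graded | apply: Ugrading_degrees].
- move=> GA d GA_conn br_homog d_ge0.
  exists (Ugrading br_Poisson envU (connected_graded GA_conn) br_homog).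
  by split; [apply: Ugrading_graded | apply: Ugrading_degrees | apply: Ugrading_connected].
- move=> GA d GA_conn GA_gen br_homog d_ge0.
  exists (Ugrading br_Poisson envU (connected_graded GA_conn) br_homog).
  split; [apply: Ugrading_graded | apply: Ugrading_degrees | exact: Ugrading_connected |].
  split; [|split].
  + move=> x Gx.
    exact: (generators_in_max_ideal br_Poisson envU GA_conn br_homog d_ge0 ltr01 Gx).
  + by move=> u; apply: (max_ideal_spanned d_ge0 GA_gen).
  + exact: (max_ideal_sq_independent d_ge0).
Qed.
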